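(* Let $d\ge1$, $m=2^d$, $r\ge2$, $t=\lceil\log_2 r\rceil$, let $p$ be a prime with $p>d$, let $c\in\{0,\dots,r-1\}^m$, $\ell\in\{0,\dots,r-1\}$, and let $\mathrm{Ind}\in\{0,1\}^m$ with $\mathrm{Ind}(i)=1$ iff $c(i)=\ell$. Let $i^*=\min\{i\in[m]:c(i)=\ell\}$ (or $0$ if none). If $i^*=0$ then $\mathrm{SPiRiT}_p(\mathrm{Ind})=0^d$. If $i^*\ge 1$ and $p$ is $A$-correct for $A=\{(T\,\mathrm{Ind})(k):k\in\mathrm{Anc}(i^* )\}$, then $\mathrm{SPiRiT}_p(\mathrm{Ind})$ is the binary representation of $i^*-1$. Moreover, writing each entry of $c$ and $\ell$ by its $t$-bit binary representation, each coordinate of $\mathrm{SPiRiT}_p(\mathrm{Ind})$ is a polynomial over $\mathbb Z_p$ in these $(m+1)t$ bits of degree at most $2t(p-1)^2$.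
   Context: Let $m=2^d$. Consider the complete binary tree with nodes indexed $1,\dots,2m-1$: node $1$ is the root, node $k\in[m-1]$ has left child $2k$ and right child $2k+1$; leaf number $i\in[m]$ is node $m+i-1$. For $i\in[m]$ let $\mathrm{Anc}(i)=\{\lfloor (m+i-1)/2^h\rfloor: h=0,\dots,d\}$ and $\mathrm{Lop}(i)=\{k-1: k\in \mathrm{Anc}(i),\ k\text{ odd},\ k\ge 3\}$. Tree matrix $T\in\{0,1\}^{(2m-1)\times m}$: $T(k,i)=1$ iff $k\in\mathrm{Anc}(i)$. Roots matrix $R\in\{0,1\}^{m\times(2m-1)}$: for $j\in[m-1]$, $R(j,k)=1$ iff $k\in\mathrm{Lop}(j+1)$; row $m$ of $R$ is the indicator vector of $\{1\}$. Pairwise matrix $P\in\{-1,0,1\}^{m\times m}$: $(Pu)(1)=u(1)$ and $(Pu)(k)=u(k)-u(k-1)$ for $k\ge 2$. Sketch matrix $S\in\{0,1\}^{d\times m}$: $S(h,k)$ is the $h$-th bit (coefficient of $2^{h-1}$) of $k-1$. For a prime $p$ and an integer vector $y$, $i_p(y)$ is the vector with entries $y(k)^{p-1}\bmod p$, and $\mathrm{SPiRiT}_p(x)=\big(SP\cdot i_p\big((R\cdot i_p(Tx\bmod p))\bmod p\big)\big)\bmod p$. ''Binary representation of $n$'' means the vector whose $h$-th entry is the coefficient of $2^{h-1}$ in $n$. For a set $A$ of integers, $p$ is $A$-correct if for every $a\in A$: $a=0$ iff $a\equiv0\pmod p$. *)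

(* Vectors / matrices are 1-indexed functions nat -> int;
   products sum over the explicit index ranges given in the paper. *)
From mathcomp Require Import all_boot all_order all_algebra.
Unset Printing Implicit Defensive.
Import Order.TTheory GRing.Theory Num.Theory.
Local Open Scope ring_scope.

Definition anc (d i : nat) : seq nat :=
  [seq ((expn 2 d + i - 1) %/ expn 2 h)%N | h <- iota 0 d.+1].

Definition lop (d i : nat) : seq nat :=
  [seq k.-1 | k <- anc d i & odd k && (3 <= k)%N].

Definition Tmat (d : nat) (k i : nat) : int := (k \in anc d i)%:Z.

Definition Rmat (d : nat) (j k : nat) : int :=
  if (j < expn 2 d)%N then (k \in lop d j.+1)%:Z else (k == 1%N)%:Z.

Definition Pmat (k i : nat) : int :=
  (if i == k then 1 else if (2 <= k)%N && (i == k.-1) then -1 else 0)%R.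

(* h-th bit (coefficient of 2^(h-1)) of n, h >= 1 *)
Definition bitof (n h : nat) : int := (odd (n %/ expn 2 h.-1))%:Z.

Definition Smat (h k : nat) : int := bitof k.-1 h.

Definition mulv (n : nat) (A : nat -> nat -> int) (u : nat -> int) : nat -> int :=
  fun k => (\sum_(1 <= i < n.+1) A k i * u i)%R.

Definition modv (p : nat) (u : nat -> int) : nat -> int :=
  fun k => ((u k) %% (p%:Z))%Z.

Definition ip (p : nat) (y : nat -> int) : nat -> int :=
  fun k => (((y k) ^+ (p.-1))%R %% (p%:Z))%Z.

Definition spirit (d p : nat) (x : nat -> int) : nat -> int :=
  let m := (expn 2 d)%N in
  modv p (mulv m Smat (mulv m Pmat
    (ip p (modv p (mulv (2 * m)%N.-1 (Rmat d)
      (ip p (modv p (mulv m (Tmat d) x)))))))).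

Definition ind (c : nat -> nat) (l : nat) : nat -> int :=
  fun i => (c i == l)%:Z.

Definition istar (d : nat) (c : nat -> nat) (l : nat) : nat :=
  head 0%N [seq i <- iota 1 (expn 2 d) | c i == l].

Definition Acorrect (p : nat) (A : seq int) : Prop :=
  forall a, a \in A -> (a == 0%R) = ((a %% (p%:Z))%Z == 0%R).

(* Multivariate polynomials with integer coefficients (read mod p) over a
   finite set of variables V: a finite list of (coefficient, exponent vector). *)
Definition mpoly (V : finType) := seq (int * {ffun V -> nat}).

Definition mdeg_le {V : finType} (Q : mpoly V) (D : nat) : bool :=
  all (fun me : int * {ffun V -> nat} => (\sum_(v : V) me.2 v <= D)%N) Q.

Definition meval {V : finType} (Q : mpoly V) (x : V -> int) : int :=
  (\sum_(me <- Q) me.1 * \prod_(v : V) (x v) ^+ (me.2 v))%R.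

(* The (m+1)t input bits: variable (j, b) with j < m is bit b (coefficient
   of 2^b) of c(j+1); with j = m it is bit b of l. *)
Definition varT (d t : nat) : finType := ('I_(expn 2 d + 1) * 'I_t)%type.

Definition inbits (d t : nat) (c : nat -> nat) (l : nat) : varT d t -> int :=
  fun v => (odd ((if (v.1 < expn 2 d)%N then c (v.1).+1 else l) %/ expn 2 v.2))%:Z.

From mathcomp Require Import all_boot all_order all_algebra cyclic zify.
Import Order.TTheory GRing.Theory Num.Theory.
Local Open Scope ring_scope.

(* The entries of [T Ind] count the matches below each node, and [i_p] turns
   them, by Fermat's little theorem, into flags "some match below this node";
   [A]-correctness makes the flags on the path from the root to leaf i* nonzero.
   The nodes of Lop(j+1) are the left siblings along the path to leaf j+1, the
   roots of subtrees partitioning the leaves 1..j, so row j < m of [R] counts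
   between 1 and d < p flags when i* <= j and none otherwise, while row m reads
   the root flag.  The second [i_p] thus yields the step vector [i* <= j], which
   [P] turns into the indicator of i* and [S] into the bits of i* - 1.
   For the degree bound, Ind(i) is the product over the t bit positions b of
   1 - (c_i[b] - l[b])^2, and each [i_p] multiplies the degree by p - 1. *)

Lemma expr_pred_prime_modz (p : nat) (y : int) : prime p -> 0 <= y < p%:Z ->
  (y ^+ p.-1 %% p%:Z)%Z = (y != 0)%:Z.
Proof.
move=> p_pr; case: y => [n|//] /andP[_]; rewrite ltz_nat => n_lt.
rewrite -natz -natrX natz modz_nat; case: n n_lt => [|n] n_lt.
  by rewrite exp0n ?mod0n // -ltnS prednK ?prime_gt1 ?prime_gt0.
have co : coprime n.+1 p by rewrite coprime_sym prime_coprime // gtnNdvd.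
by rewrite -(totient_prime p_pr) Euler_exp_totient // modn_small ?prime_gt1 // pnatr_eq0.
Qed.

Lemma ip_modv p (u : nat -> int) k : prime p ->
  ip p (modv p u) k = ((u k %% p%:Z)%Z != 0)%:Z.
Proof.
move=> p_pr; rewrite /ip /modv expr_pred_prime_modz // modz_ge0 ?ltz_pmod //.
  by rewrite ltz_nat prime_gt0.
by rewrite eqz_nat gtn_eqF ?prime_gt0.
Qed.

Section PolyRepr.
Context {V : finType} {A : Type} {P : A -> Prop} {emb : A -> V -> int} {p : nat}.

Definition polyrep (D : nat) (f : A -> int) :=
  exists Q : mpoly V, mdeg_le Q D /\
    forall a, P a -> (f a %% p%:Z)%Z = (meval Q (emb a) %% p%:Z)%Z.

Lemma polyrep_le {D D' f} : (D <= D')%N -> polyrep D f -> polyrep D' f.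
Proof.
move=> le_DD' [Q [Q_deg Q_val]]; exists Q; split => //.
by apply/allP => me /(allP Q_deg) /leq_trans; apply.
Qed.

Lemma polyrep_ext {D f g} : polyrep D f ->
  (forall a, P a -> (f a %% p%:Z)%Z = (g a %% p%:Z)%Z) -> polyrep D g.
Proof. by move=> [Q [Q_deg Q_val]] fg; exists Q; split => // a Pa; rewrite -fg // Q_val. Qed.

Lemma polyrep_mod {D f} : polyrep D f -> polyrep D (fun a => (f a %% p%:Z)%Z).
Proof. by move/polyrep_ext; apply => a _; rewrite modz_mod. Qed.

Lemma polyrep_const c : polyrep 0 (fun _ => c).
Proof.
exists [:: (c, [ffun=> 0%N])]; split.
  by rewrite /mdeg_le /= big1 // => v; rewrite ffunE.
move=> a _; rewrite /meval big_seq1 /= big1 ?mulr1 // => v _.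
by rewrite ffunE expr0.
Qed.

Lemma polyrep_var v : polyrep 1 (fun a => emb a v).
Proof.
have deg_v w : [ffun w => (w == v : nat)] w = (w == v) by rewrite ffunE.
exists [:: (1, [ffun w => (w == v : nat)])]; split.
  by rewrite /mdeg_le /= (bigD1 v) //= big1 ?deg_v ?eqxx // => w /negbTE; rewrite deg_v => ->.
move=> a _; rewrite /meval big_seq1 /= mul1r (bigD1 v) //= deg_v eqxx expr1.
by rewrite big1 ?mulr1 // => w /negbTE; rewrite deg_v => ->.
Qed.

Lemma polyrep_add {D f g} : polyrep D f -> polyrep D g -> polyrep D (fun a => f a + g a).
Proof.
move=> [Q1 [Q1_deg Q1_val]] [Q2 [Q2_deg Q2_val]]; exists (Q1 ++ Q2); split.
  by rewrite /mdeg_le all_cat; apply/andP.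
by move=> a Pa; rewrite /meval big_cat -modzDm Q1_val // Q2_val // modzDm.
Qed.

Definition mpoly_mul (Q1 Q2 : mpoly V) : mpoly V :=
  [seq (me1.1 * me2.1, [ffun v => (me1.2 v + me2.2 v)%N])
  | me1 : int * {ffun V -> nat} <- Q1, me2 : int * {ffun V -> nat} <- Q2].

Lemma meval_mul Q1 Q2 x : meval (mpoly_mul Q1 Q2) x = meval Q1 x * meval Q2 x.
Proof.
rewrite /meval /mpoly_mul big_allpairs_dep mulr_suml; apply: eq_bigr => me1 _.
rewrite mulr_sumr; apply: eq_bigr => me2 _ /=.
rewrite -!mulrA; congr (_ * _); rewrite mulrCA; congr (_ * _).
by rewrite -big_split; apply: eq_bigr => v _; rewrite ffunE exprD.
Qed.

Lemma polyrep_mul {D1 D2 f g} :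
  polyrep D1 f -> polyrep D2 g -> polyrep (D1 + D2) (fun a => f a * g a).
Proof.
move=> [Q1 [Q1_deg Q1_val]] [Q2 [Q2_deg Q2_val]]; exists (mpoly_mul Q1 Q2); split.
  apply/allP => _ /allpairsP[[me1 me2] [/= me1_in me2_in ->]] /=.
  under eq_bigr do rewrite ffunE.
  by rewrite big_split leq_add ?(allP Q1_deg _ me1_in) ?(allP Q2_deg _ me2_in).
by move=> a Pa; rewrite meval_mul -modzMm Q1_val // Q2_val // modzMm.
Qed.

Lemma polyrep_sub {D f g} : polyrep D f -> polyrep D g -> polyrep D (fun a => f a - g a).
Proof.
move=> Hf /(polyrep_mul (polyrep_const (-1))) /(polyrep_add Hf) /polyrep_ext; apply.
by move=> a _; rewrite mulN1r.
Qed.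

Lemma polyrep_exp {D} n {f} : polyrep D f -> polyrep (n * D) (fun a => f a ^+ n).
Proof.
move=> Hf; elim: n => [|n IH].
  by apply: polyrep_ext (polyrep_const 1) _ => a _; rewrite expr0.
by rewrite mulSn; apply: polyrep_ext (polyrep_mul Hf IH) _ => a _; rewrite exprS.
Qed.

Lemma polyrep_sum {I : eqType} (s : seq I) D (F : I -> A -> int) :
  (forall i, i \in s -> polyrep D (F i)) -> polyrep D (fun a => \sum_(i <- s) F i a).
Proof.
elim: s => [|i s IH] HF.
  apply: polyrep_le (leq0n D) _.
  by apply: polyrep_ext (polyrep_const 0) _ => a _; rewrite big_nil.
have Hs : polyrep D (fun a => \sum_(j <- s) F j a).
  by apply: IH => j j_s; apply: HF; rewrite inE j_s orbT.
by apply: polyrep_ext (polyrep_add (HF i (mem_head _ _)) Hs) _ => a _; rewrite big_cons.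
Qed.

Lemma polyrep_prod {I : eqType} (s : seq I) D (F : I -> A -> int) :
  (forall i, i \in s -> polyrep D (F i)) ->
  polyrep (size s * D) (fun a => \prod_(i <- s) F i a).
Proof.
elim: s => [|i s IH] HF.
  by apply: polyrep_ext (polyrep_const 1) _ => a _; rewrite big_nil.
have Hs : polyrep (size s * D) (fun a => \prod_(j <- s) F j a).
  by apply: IH => j j_s; apply: HF; rewrite inE j_s orbT.
rewrite /= mulSn.
by apply: polyrep_ext (polyrep_mul (HF i (mem_head _ _)) Hs) _ => a _; rewrite big_cons.
Qed.

Lemma polyrep_mulv n M (u : A -> nat -> int) D k :
  (forall i, (1 <= i <= n)%N -> polyrep D (fun a => u a i)) ->
  polyrep D (fun a => mulv n M (u a) k).
Proof.
move=> Hu; apply: polyrep_sum => i; rewrite mem_index_iota ltnS => i_range.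
exact: polyrep_mul (polyrep_const _) (Hu i i_range).
Qed.

Lemma polyrep_ip (u : A -> nat -> int) D k :
  polyrep D (fun a => u a k) -> polyrep (p.-1 * D) (fun a => ip p (u a) k).
Proof. by move=> Hu; apply/polyrep_mod/polyrep_exp. Qed.

End PolyRepr.

Lemma bits_inj t a b : (a < 2 ^ t)%N -> (b < 2 ^ t)%N ->
  (forall k, (k < t)%N -> odd (a %/ 2 ^ k) = odd (b %/ 2 ^ k)) -> a = b.
Proof.
elim: t a b => [|t IH] a b a_lt b_lt bits_ab.
  by move: a_lt b_lt; rewrite expn0 !ltnS !leqn0 => /eqP-> /eqP->.
have half_lt x : (x < 2 ^ t.+1)%N -> (x./2 < 2 ^ t)%N.
  by rewrite -divn2 ltn_divLR // -expnSr.
have halves : a./2 = b./2.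
  apply: IH; rewrite ?half_lt // => k k_lt.
  by rewrite -!divn2 -!divnMA -expnS; apply: bits_ab.
have := bits_ab 0%N isT; rewrite expn0 !divn1 => odd_ab.
by rewrite -(odd_double_half a) -(odd_double_half b) odd_ab halves.
Qed.

Lemma eqb_boolz (u v : bool) : 1 - (u%:Z - v%:Z) ^+ 2 = (u == v)%:Z.
Proof. by case: u; case: v. Qed.

Section InputBits.
Variables (d r p : nat).

Definition input_ok (a : (nat -> nat) * nat) : Prop :=
  (forall i, (1 <= i <= 2 ^ d)%N -> (a.1 i < r)%N) /\ (a.2 < r)%N.

Definition input_bits (a : (nat -> nat) * nat) := inbits d (up_log 2 r) a.1 a.2.

Notation inrep := (@polyrep (varT d (up_log 2 r)) _ input_ok input_bits p).

Lemma polyrep_ind i : (1 <= i <= 2 ^ d)%N ->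
  inrep (up_log 2 r * 2) (fun a => ind a.1 a.2 i).
Proof.
move=> i_range; set t := up_log 2 r.
have i_lt : (i.-1 < 2 ^ d + 1)%N by lia.
have l_lt : (2 ^ d < 2 ^ d + 1)%N by lia.
pose bit_eq (k : 'I_t) a :=
  1 - (input_bits a (Ordinal i_lt, k) - input_bits a (Ordinal l_lt, k)) ^+ 2.
have bit_eq_rep k : inrep 2 (bit_eq k).
  have diff : inrep 1 (fun a =>
      input_bits a (Ordinal i_lt, k) - input_bits a (Ordinal l_lt, k)).
    exact: polyrep_sub (polyrep_var _) (polyrep_var _).
  exact: polyrep_sub (polyrep_le (leq0n 2) (polyrep_const 1)) (polyrep_exp 2 diff).
have := polyrep_prod (enum 'I_t) 2 bit_eq (fun k _ => bit_eq_rep k).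
rewrite size_enum_ord => /polyrep_ext; apply=> -[c l] [c_lt l_lt'] /=; congr (_ %% _)%Z.
have bit_eqE k : bit_eq k (c, l) = (odd (c i %/ 2 ^ k) == odd (l %/ 2 ^ k))%:Z.
  by rewrite /bit_eq /input_bits /inbits /= ltnn ifT ?prednK ?eqb_boolz //; lia.
under eq_bigr do rewrite bit_eqE.
rewrite /ind; have [->|c_ne] := eqVneq (c i) l; first by rewrite big1 // => k _; rewrite eqxx.
have r_le : (r <= 2 ^ t)%N by apply: up_logP.
have [k k_ne] : exists k : 'I_t, odd (c i %/ 2 ^ k) != odd (l %/ 2 ^ k).
  apply/existsP; apply: contraNT c_ne => /existsPn all_eq; apply/eqP.
  apply: (@bits_inj t); rewrite ?(leq_trans _ r_le) ?c_lt // => k k_lt.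
  by apply/eqP; rewrite -[_ == _]negbK (all_eq (Ordinal k_lt)).
by rewrite (bigD1_seq k) ?mem_enum ?enum_uniq //= (negbTE k_ne) mul0r.
Qed.

Lemma polyrep_spirit h :
  inrep (p.-1 * (p.-1 * (up_log 2 r * 2))) (fun a => spirit d p (ind a.1 a.2) h).
Proof.
apply/polyrep_mod/polyrep_mulv => k _; apply: polyrep_mulv => j _.
apply/polyrep_ip/polyrep_mod/polyrep_mulv => k' _.
apply/polyrep_ip/polyrep_mod/polyrep_mulv => i i_range.
exact: polyrep_ind.
Qed.

End InputBits.

Lemma spirit_poly_degree d r p h :
  exists Q : mpoly (varT d (up_log 2 r)),
    mdeg_le Q (2 * up_log 2 r * expn p.-1 2)%N /\
    forall (c : nat -> nat) (l : nat),
      (forall i, (1 <= i <= expn 2 d)%N -> (c i < r)%N) -> (l < r)%N ->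
      spirit d p (ind c l) h = ((meval Q (inbits d (up_log 2 r) c l)) %% (p%:Z))%Z.
Proof.
have [Q [Q_deg Q_val]] := polyrep_spirit d r p h; exists Q; split.
  by apply/allP => me /(allP Q_deg) /leq_trans; apply; lia.
move=> c l c_lt l_lt; rewrite -(Q_val (c, l)) //.
by rewrite /spirit /modv modz_mod.
Qed.

Lemma divn_exp2_range {d h x} : (h <= d)%N -> (2 ^ d <= x < 2 ^ d.+1)%N ->
  (2 ^ (d - h) <= x %/ 2 ^ h < 2 ^ (d - h).+1)%N.
Proof.
move=> h_le /andP[x_ge x_lt]; rewrite leq_divRL ?expn_gt0 // ltn_divLR ?expn_gt0 //.
by rewrite -!expnD subnK // addSn subnK // x_ge x_lt.
Qed.

Lemma exp2_range_inj {e1 e2 x} : (2 ^ e1 <= x < 2 ^ e1.+1)%N ->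
  (2 ^ e2 <= x < 2 ^ e2.+1)%N -> e1 = e2.
Proof.
move=> /andP[x_ge1 x_lt1] /andP[x_ge2 x_lt2].
have lt12 : (e1 < e2.+1)%N by rewrite -(ltn_exp2l _ _ (ltnSn 1)) (leq_ltn_trans x_ge1).
have lt21 : (e2 < e1.+1)%N by rewrite -(ltn_exp2l _ _ (ltnSn 1)) (leq_ltn_trans x_ge2).
lia.
Qed.

Lemma divn_exp2_sibling {x y e} : (x < y)%N -> (x %/ 2 ^ e = y %/ 2 ^ e)%N ->
  exists2 h, (h < e)%N & (y %/ 2 ^ h = (x %/ 2 ^ h).+1)%N /\ odd (y %/ 2 ^ h).
Proof.
case: e => [|e] lt_xy; first by rewrite !expn0 !divn1 => eq_xy; lia.
move=> eq_e; have ex_h : exists h, (x %/ 2 ^ h.+1 == y %/ 2 ^ h.+1)%N by exists e; apply/eqP.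
case: (ex_minnP ex_h) => h /eqP eq_h h_min; exists h; first by rewrite ltnS h_min ?eq_e.
have ne_h : (x %/ 2 ^ h != y %/ 2 ^ h)%N.
  case: h eq_h h_min => [|h] _ h_min; first by rewrite !expn0 !divn1 ltn_eqF.
  by apply/negP => /h_min; rewrite ltnn.
have le_h : (x %/ 2 ^ h <= y %/ 2 ^ h)%N by rewrite leq_div2r // ltnW.
move: eq_h ne_h le_h; rewrite expnSr !divnMA.
move: (x %/ 2 ^ h)%N (y %/ 2 ^ h)%N => a b eq_half ne_ab le_ab.
have b_mod2 : (b %% 2 = 1)%N by lia.
by split; [lia | move: b_mod2; rewrite modn2; case: odd].
Qed.

Definition leaf d i := (2 ^ d + i - 1)%N.

Lemma leaf_range {d i} : (1 <= i <= 2 ^ d)%N -> (2 ^ d <= leaf d i < 2 ^ d.+1)%N.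
Proof. by rewrite /leaf expnS; lia. Qed.

Lemma mem_anc d i k :
  (k \in anc d i) = has (fun h => k == leaf d i %/ 2 ^ h)%N (iota 0 d.+1).
Proof. by apply/mapP/hasP => [[h h_in ->]|[h h_in /eqP ->]]; exists h. Qed.

Lemma mem_lop d j k : (k \in lop d j) =
  has (fun h => let a := (leaf d j %/ 2 ^ h)%N in [&& odd a, 3 <= a & k == a.-1]%N)
      (iota 0 d.+1).
Proof.
apply/mapP/hasP => [[a]|[h h_in /and3P[a_odd a_ge /eqP ->]]].
  rewrite mem_filter => /andP[/andP[a_odd a_ge] /mapP[h h_in a_eq]] ->; subst a.
  by exists h; rewrite //= a_odd a_ge eqxx.
by exists (leaf d j %/ 2 ^ h)%N; rewrite // mem_filter a_odd a_ge (map_f (fun h => _)).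
Qed.

Lemma leaf_divn_root {d i} : (1 <= i <= 2 ^ d)%N -> (leaf d i %/ 2 ^ d = 1)%N.
Proof.
move=> i_range; have := divn_exp2_range (leqnn d) (leaf_range i_range).
by rewrite subnn expn0 expn1; lia.
Qed.

Lemma anc_root d i : (1 <= i <= 2 ^ d)%N -> 1%N \in anc d i.
Proof.
move=> i_range; rewrite mem_anc; apply/hasP; exists d; first by rewrite mem_iota add0n ltnSn.
by rewrite leaf_divn_root.
Qed.

Lemma anc_range {d i k} : (1 <= i <= 2 ^ d)%N -> k \in anc d i ->
  (1 <= k < (2 * 2 ^ d).-1.+1)%N.
Proof.
move=> i_range; rewrite mem_anc => /hasP[h]; rewrite mem_iota add0n ltnS => /andP[_ h_le] /eqP->.
have /andP[k_ge k_lt] := divn_exp2_range h_le (leaf_range i_range).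
have pow_le : (2 ^ (d - h) <= 2 ^ d)%N by rewrite leq_pexp2l ?leq_subr.
have pow_gt0 := expn_gt0 2 (d - h).
by move: k_lt; rewrite expnS; lia.
Qed.

Lemma lop_anc_lt {d i j k} : (1 <= i <= 2 ^ d)%N -> (1 <= j <= 2 ^ d)%N ->
  k \in lop d j -> k \in anc d i -> (i < j)%N.
Proof.
move=> i_range j_range; rewrite mem_lop mem_anc => /hasP[h].
rewrite mem_iota add0n ltnS => /andP[_ h_le]; set a := (leaf d j %/ 2 ^ h)%N.
move=> /and3P[a_odd a_ge /eqP k_eq] /hasP[g].
rewrite mem_iota add0n ltnS => /andP[_ g_le] /eqP k_eq'.
have /andP[a_lo a_hi] := divn_exp2_range h_le (leaf_range j_range).
have a_ne : a != (2 ^ (d - h))%N.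
  apply: contraTneq a_odd => a_pow; move: a_ge; rewrite a_pow oddX orbF.
  by case: (d - h)%N.
have k_lvl : (2 ^ (d - h) <= k < 2 ^ (d - h).+1)%N by lia.
have := divn_exp2_range g_le (leaf_range i_range); rewrite -k_eq' => /(exp2_range_inj k_lvl).
move=> same_lvl; have g_eq : g = h by lia.
subst g.
have lt_div : (leaf d i %/ 2 ^ h < leaf d j %/ 2 ^ h)%N by rewrite -k_eq' -/a; lia.
rewrite ltnNge; apply: contraTN lt_div; rewrite -leqNgt => le_ji.
by apply: leq_div2r; rewrite /leaf; lia.
Qed.

Lemma lop_anc_meet {d i j} : (1 <= i)%N -> (i < j)%N -> (j <= 2 ^ d)%N ->
  exists2 k, k \in lop d j & k \in anc d i.
Proof.
move=> i_ge lt_ij j_le.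
have i_range : (1 <= i <= 2 ^ d)%N by lia.
have j_range : (1 <= j <= 2 ^ d)%N by lia.
have lt_leaf : (leaf d i < leaf d j)%N by rewrite /leaf; lia.
have [h h_lt [a_eq a_odd]] := divn_exp2_sibling lt_leaf
  (etrans (leaf_divn_root i_range) (esym (leaf_divn_root j_range))).
have /andP[a_lo _] := divn_exp2_range (ltnW h_lt) (leaf_range j_range).
have pow_ge2 : (2 <= 2 ^ (d - h))%N by rewrite -{1}(expn1 2) leq_pexp2l // subn_gt0.
have a_ne2 : (leaf d j %/ 2 ^ h != 2)%N by apply: contraTneq a_odd => ->.
have h_in : h \in iota 0 d.+1 by rewrite mem_iota; lia.
exists (leaf d i %/ 2 ^ h)%N; [rewrite mem_lop | rewrite mem_anc]; apply/hasP; exists h => //=.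
by rewrite a_odd a_eq /= eqxx andbT; rewrite a_eq in a_lo a_ne2; lia.
Qed.

Lemma size_lop {d j} : (1 <= j <= 2 ^ d)%N -> (size (lop d j) <= d)%N.
Proof.
move=> j_range; rewrite /lop /anc size_map -[d.+1]addn1 iotaD map_cat filter_cat size_cat add0n /=.
rewrite [(_ %/ _)%N]leaf_divn_root //= addn0 size_filter.
by rewrite (leq_trans (count_size _ _)) // size_map size_iota.
Qed.

Lemma head_filter (T : Type) (x0 : T) (P : pred T) s :
  head x0 [seq x <- s | P x] = nth x0 s (find P s).
Proof. by elim: s => //= x s IH; case: (P x). Qed.

Lemma istar_eq0 {d c l} : istar d c l = 0%N -> forall i, (1 <= i <= 2 ^ d)%N -> c i != l.
Proof.
rewrite /istar head_filter; set s := iota 1 (2 ^ d); set P := fun i => c i == l.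
have [has_match|/hasPn no_match] := boolP (has P s).
  by rewrite nth_iota ?add1n // -[X in (_ < X)%N](size_iota 1) -has_find.
by move=> _ i i_range; apply: no_match; rewrite mem_iota; lia.
Qed.

Lemma istar_gt0 {d c l} : (0 < istar d c l)%N ->
  [/\ istar d c l <= 2 ^ d, c (istar d c l) = l
    & forall i, (1 <= i < istar d c l)%N -> c i != l]%N.
Proof.
rewrite /istar head_filter; set s := iota 1 (2 ^ d); set P := fun i => c i == l.
have [has_match _|no_match] := boolP (has P s); last first.
  by rewrite nth_default // leqNgt -has_find.
have find_lt : (find P s < 2 ^ d)%N by rewrite -[X in (_ < X)%N](size_iota 1) -has_find.
have := nth_find 0%N has_match; rewrite nth_iota // => /eqP c_eq.
split => // i /andP[i_ge i_lt].
have before : (i.-1 < find P s)%N by lia.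
have i_lt' : (i.-1 < 2 ^ d)%N by lia.
by have := before_find 0%N before; rewrite nth_iota // add1n prednK // => /negbT.
Qed.

Lemma sum_nat_delta n s (F : nat -> int) : (1 <= s <= n)%N ->
  \sum_(1 <= i < n.+1) (i == s)%:Z * F i = F s.
Proof.
move=> s_range; have s_in : s \in index_iota 1 n.+1 by rewrite mem_index_iota; lia.
by rewrite (bigD1_seq s) ?iota_uniq //= eqxx mul1r big1 ?addr0 // => i /negbTE->; rewrite mul0r.
Qed.

Lemma eq_mulv n A u v k : (forall i, (1 <= i <= n)%N -> u i = v i) ->
  mulv n A u k = mulv n A v k.
Proof. by move=> uv; apply: eq_big_nat => i i_range; rewrite uv //; lia. Qed.

Lemma mulv_eq0 n A u k : (forall i, (1 <= i <= n)%N -> u i = 0) -> mulv n A u k = 0.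
Proof.
move=> u0; rewrite (@eq_mulv _ _ _ (fun=> 0)) //.
by rewrite /mulv big1 // => i _; rewrite mulr0.
Qed.

Lemma mulv_delta {n A u s k} : (1 <= s <= n)%N ->
  (forall i, (1 <= i <= n)%N -> u i = (i == s)%:Z) -> mulv n A u k = A k s.
Proof.
move=> s_range u_delta; rewrite (@eq_mulv _ _ _ (fun i => (i == s)%:Z)) //.
by rewrite /mulv (eq_bigr _ (fun i _ => mulrC _ _)) sum_nat_delta.
Qed.

Lemma mulv_bool n A (a b : pred nat) k : (forall i, A k i = (a i)%:Z) ->
  mulv n A (fun i => (b i)%:Z) k = (count (predI a b) (index_iota 1 n.+1))%:Z.
Proof.
move=> Ak; rewrite /mulv -sum1_count -natz natr_sum [RHS]big_mkcond /=.
by apply: eq_bigr => i _; rewrite Ak; case: (a i); case: (b i).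
Qed.

Lemma mulv_Pmat n u k : (1 <= k <= n)%N ->
  mulv n Pmat u k = u k - (1 < k)%N%:Z * u k.-1.
Proof.
move=> k_range; have PmatE i : Pmat k i = (i == k)%:Z - ((1 < k) && (i == k.-1))%N%:Z.
  rewrite /Pmat; case: (eqVneq i k) => [->|_]; last by case: ifP; rewrite sub0r.
  by rewrite (_ : k == k.-1 = false) ?andbF ?subr0 //; apply/negbTE/eqP; lia.
rewrite /mulv (eq_bigr _ (fun i _ => congr1 (fun x => x * u i) (PmatE i))).
rewrite (eq_bigr _ (fun i _ => mulrBl _ _ _)) sumrB sum_nat_delta //.
case: (ltnP 1 k) => [k_gt1|k_le1] /=; last by rewrite big1 ?mul0r // => i _; rewrite mul0r.
by rewrite sum_nat_delta ?mul1r //; lia.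
Qed.

Lemma mulv_Pmat_step n u s k : (1 <= s)%N ->
  (forall j, (1 <= j <= n)%N -> u j = (s <= j)%N%:Z) ->
  (1 <= k <= n)%N -> mulv n Pmat u k = (k == s)%:Z.
Proof.
move=> s_ge u_step k_range; rewrite mulv_Pmat // u_step //.
case: (ltnP 1 k) => [k_gt1|k_le1]; last first.
  by rewrite mul0r subr0 (_ : k = 1%N) ?eqn_leq ?s_ge ?andbT //; lia.
rewrite mul1r u_step; last lia.
have [lt_sk|lt_ks|->] := ltngtP s k.
- by rewrite (_ : s <= k.-1)%N ?subrr //; lia.
- by rewrite (_ : (s <= k.-1)%N = false) ?subrr //; apply/negbTE; rewrite -ltnNge; lia.
- by rewrite (_ : (k <= k.-1)%N = false) ?subr0 //; apply/negbTE; rewrite -ltnNge; lia.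
Qed.

Section SpiritCorrect.
Variables (d p : nat) (c : nat -> nat) (l : nat).
Hypotheses (p_prime : prime p) (d_lt_p : (d < p)%N).

Let leaves := index_iota 1 (2 ^ d).+1.
Let nodes := index_iota 1 (2 * 2 ^ d).-1.+1.
Let subtree_matches := mulv (2 ^ d) (Tmat d) (ind c l).
Let subtree_hit k := (subtree_matches k %% p%:Z)%Z != 0.
Let lop_hits := mulv (2 * 2 ^ d).-1 (Rmat d) (ip p (modv p subtree_matches)).

Lemma spiritE h : spirit d p (ind c l) h =
  modv p (mulv (2 ^ d) Smat (mulv (2 ^ d) Pmat (ip p (modv p lop_hits)))) h.
Proof. by []. Qed.

Lemma subtree_matchesE k :
  subtree_matches k = (count (fun i => (k \in anc d i) && (c i == l)) leaves)%:Z.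
Proof. exact: mulv_bool. Qed.

Lemma lop_hitsE j : (j < 2 ^ d)%N ->
  lop_hits j = (count (fun k => (k \in lop d j.+1) && subtree_hit k) nodes)%:Z.
Proof.
move=> j_lt; rewrite /lop_hits (@eq_mulv _ _ _ (fun k => (subtree_hit k)%:Z)).
  by apply: mulv_bool => k; rewrite /Rmat j_lt.
by move=> k _; apply: ip_modv.
Qed.

Lemma lop_hits_root : lop_hits (2 ^ d) = ip p (modv p subtree_matches) 1%N.
Proof.
rewrite /lop_hits /mulv /Rmat ltnn sum_nat_delta //.
by have := expn_gt0 2 d; lia.
Qed.

Lemma spirit_no_match h : istar d c l = 0%N -> spirit d p (ind c l) h = 0.
Proof.
move/istar_eq0 => no_match.
have no_matches k : subtree_matches k = 0.
  by apply: mulv_eq0 => i /no_match; rewrite /ind => /negbTE->.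
have no_hits j : lop_hits j = 0.
  by apply: mulv_eq0 => k _; rewrite ip_modv // no_matches mod0z.
rewrite spiritE /modv mulv_eq0 ?mod0z // => k _.
by apply: mulv_eq0 => j _; rewrite ip_modv // no_hits mod0z.
Qed.

Section FirstMatch.
Hypothesis istar_pos : (0 < istar d c l)%N.

Lemma lop_hits_below j : (1 <= j < istar d c l)%N -> lop_hits j = 0.
Proof.
move=> j_range; have [st_le _ st_min] := istar_gt0 istar_pos.
rewrite lop_hitsE; last lia.
apply/eqP; rewrite eqz_nat -leqn0 leqNgt -has_count; apply/hasPn => k _.
apply/negP => /andP[k_lop]; rewrite /subtree_hit subtree_matchesE; apply/negP; rewrite negbK.
rewrite (_ : count _ _ = 0%N) ?mod0z //; apply/eqP; rewrite -leqn0 leqNgt -has_count.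
apply/hasPn => i; rewrite mem_index_iota => i_range; apply/negP => /andP[k_anc /eqP c_i].
have lt_ij : (i < j.+1)%N by apply: lop_anc_lt k_lop k_anc; lia.
suff : c i != l by rewrite c_i eqxx.
by apply: st_min; lia.
Qed.

Section Correct.
Hypothesis correct : Acorrect p [seq subtree_matches k | k <- anc d (istar d c l)].

Lemma subtree_hit_anc k : k \in anc d (istar d c l) -> subtree_hit k.
Proof.
move=> k_anc; have [st_le c_st _] := istar_gt0 istar_pos.
rewrite /subtree_hit -(correct _ (map_f _ k_anc)) subtree_matchesE eqz_nat -lt0n -has_count.
by apply/hasP; exists (istar d c l); rewrite ?mem_index_iota ?k_anc ?c_st ?eqxx //; lia.
Qed.

Lemma lop_hits_above j : (istar d c l <= j < 2 ^ d)%N -> (lop_hits j %% p%:Z)%Z != 0.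
Proof.
move=> j_range; have [st_le _ _] := istar_gt0 istar_pos.
have [k k_lop k_anc] : exists2 k, k \in lop d j.+1 & k \in anc d (istar d c l).
  by apply: lop_anc_meet; lia.
rewrite lop_hitsE; last lia.
set hits := count _ _; have hits_gt0 : (0 < hits)%N.
  rewrite -has_count; apply/hasP; exists k; last by rewrite k_lop subtree_hit_anc.
  by rewrite mem_index_iota; apply: anc_range k_anc; lia.
have hits_le : (hits <= d)%N.
  apply: leq_trans (@size_lop d j.+1 _); last lia.
  rewrite /hits -size_filter; apply: uniq_leq_size; first exact/filter_uniq/iota_uniq.
  by move=> x; rewrite mem_filter => /andP[/andP[]].
by rewrite modz_small ?eqz_nat -?lt0n //; lia.
Qed.

Lemma lop_hits_root_nz : (lop_hits (2 ^ d) %% p%:Z)%Z != 0.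
Proof.
have [st_le _ _] := istar_gt0 istar_pos.
rewrite lop_hits_root ip_modv // -/(subtree_hit 1) subtree_hit_anc ?anc_root ?istar_pos //.
by rewrite modz_small // ltz_nat prime_gt1.
Qed.

Lemma ip_lop_hits j : (1 <= j <= 2 ^ d)%N ->
  ip p (modv p lop_hits) j = (istar d c l <= j)%N%:Z.
Proof.
move=> j_range; rewrite ip_modv //.
have [lt_j_st|le_st_j] := ltnP j (istar d c l); first by rewrite lop_hits_below ?mod0z //; lia.
have [lt_j|j_eq] := ltnP j (2 ^ d); first by rewrite lop_hits_above //; lia.
by rewrite (_ : j = 2 ^ d)%N ?lop_hits_root_nz //; lia.
Qed.

Lemma spirit_first_match h : spirit d p (ind c l) h = bitof (istar d c l).-1 h.
Proof.
have [st_le _ _] := istar_gt0 istar_pos.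
have first_match k : (1 <= k <= 2 ^ d)%N ->
    mulv (2 ^ d) Pmat (ip p (modv p lop_hits)) k = (k == istar d c l)%:Z.
  by move=> k_range; apply: mulv_Pmat_step => // j j_range; apply: ip_lop_hits.
rewrite spiritE /modv (mulv_delta _ first_match); last by rewrite istar_pos.
have p_gt1 := prime_gt1 p_prime.
by rewrite /Smat modz_small // /bitof; case: odd => /=; lia.
Qed.

End Correct.
End FirstMatch.
End SpiritCorrect.

Theorem lemma3 (d r p : nat) :
  (1 <= d)%N -> (2 <= r)%N -> prime p -> (d < p)%N ->
  (forall (c : nat -> nat) (l : nat),
     (forall i, (1 <= i <= expn 2 d)%N -> (c i < r)%N) -> (l < r)%N ->
     (istar d c l = 0%N ->
        forall h, (1 <= h <= d)%N -> spirit d p (ind c l) h = 0) /\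
     ((1 <= istar d c l)%N ->
        Acorrect p [seq mulv (expn 2 d) (Tmat d) (ind c l) k | k <- anc d (istar d c l)] ->
        forall h, (1 <= h <= d)%N ->
          spirit d p (ind c l) h = bitof (istar d c l).-1 h)) /\
  (forall h, (1 <= h <= d)%N ->
     exists Q : mpoly (varT d (up_log 2 r)),
       mdeg_le Q (2 * up_log 2 r * expn p.-1 2)%N /\
       forall (c : nat -> nat) (l : nat),
         (forall i, (1 <= i <= expn 2 d)%N -> (c i < r)%N) -> (l < r)%N ->
         spirit d p (ind c l) h
           = ((meval Q (inbits d (up_log 2 r) c l)) %% (p%:Z))%Z).
Proof.
move=> _ _ p_prime d_lt_p; split => [c l _ _ | h _]; last exact: spirit_poly_degree.
split => [no_match h _ | istar_pos correct h _].
- exact: spirit_no_match.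
- exact: spirit_first_match.
Qed.
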